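(* Let $r\ge2$ and let $\mathcal{P}$ be a set of $m\ge2$ non-collectable $r$-patterns. Then every $\mathcal P$-clique has size smaller than the multicolor Ramsey number $R_m(3)$. In particular, if $m=2$, every $\mathcal P$-clique has at most $5$ edges.
   Context: An ordered $r$-matching is a set of pairwise disjoint $r$-element subsets (edges) of a linearly ordered vertex set covering it. An $r$-pattern is an ordered $r$-matching of size 2, written as a word over $\{A,B\}$ (each letter $r$ times, starting with $A$). Two edges form pattern $P$ if they induce a matching order-isomorphic to $P$; a $\mathcal P$-clique is an ordered matching all of whose pairs of edges form patterns in $\mathcal P$. An $r$-pattern is collectable if it can be split into consecutive blocks each of the form $A^tB^t$ or $B^tA^t$ ($t\ge1$); otherwise it is non-collectable. $R_m(3)$ is the least $N$ such that every coloring of the edges of the complete graph $K_N$ with $m$ colors contains a monochromatic triangle. *)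

From mathcomp Require Import all_boot.
Set Implicit Arguments. Unset Strict Implicit. Unset Printing Implicit Defensive.

(* Words over {A,B}: A is encoded by [true], B by [false]. *)

Definition is_pattern (r : nat) (w : seq bool) : Prop :=
  count id w = r /\ count negb w = r /\ head false w = true.

Definition block (t : nat) (b : bool) : seq bool := nseq t b ++ nseq t (~~ b).

Definition collectable (w : seq bool) : Prop :=
  exists bs : seq (nat * bool),
    all (fun tb => 0 < tb.1) bs /\ w = flatten [seq block tb.1 tb.2 | tb <- bs].

(* Vertex set 'I_N, ordered by the natural order. *)
Definition ordered_matching (r N : nat) (M : {set {set 'I_N}}) : Prop :=
  (forall e, e \in M -> #|e| = r) /\
  (forall e f, e \in M -> f \in M -> e != f -> [disjoint e & f]) /\
  (\bigcup_(e in M) e = [set: 'I_N]).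

(* The pattern (word) formed by two edges e, f: list the vertices of e ∪ f in
   increasing order, writing A for vertices of the edge containing the
   smallest vertex and B for the others. *)
Definition pattern_of (N : nat) (e f : {set 'I_N}) : seq bool :=
  match sort (fun x y : 'I_N => (x <= y)%N) (enum (e :|: f)) with
  | [::] => [::]
  | a :: s' => [seq (x \in e) == (a \in e) | x <- a :: s']
  end.

Definition P_clique (N : nat) (P : seq (seq bool)) (M : {set {set 'I_N}}) : Prop :=
  forall e f, e \in M -> f \in M -> e != f -> pattern_of e f \in P.

(* Every m-colouring of the edges of K_N (colour of {i,j}, i<j, is c i j)
   contains a monochromatic triangle. *)
Definition mono_triangle_prop (m N : nat) : Prop :=
  forall c : 'I_N -> 'I_N -> 'I_m,
    exists i j k : 'I_N, [/\ (i < j)%N, (j < k)%N, c i j = c j k & c i j = c i k].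

Definition is_Ramsey3 (m R : nat) : Prop :=
  mono_triangle_prop m R /\ forall N, mono_triangle_prop m N -> R <= N.

From mathcomp Require Import all_boot zify.
Set Implicit Arguments. Unset Strict Implicit. Unset Printing Implicit Defensive.

(* Colour each pair of edges of a P-clique by the pattern it forms.  A
   monochromatic triangle yields edges X, Y, Z, each starting before the next,
   pairwise forming the same pattern w.  Comparing the i-th vertices of X, Y, Z
   shows that w never switches letters right after a prefix in which the new
   letter leads by two or more.  A balanced word with this property is
   collectable: its maximal first run b^t must be followed by at least t copies
   of the other letter, so A^tB^t or B^tA^t can be peeled off.  For m = 2 the
   bound R_2(3) <= 6 is checked by enumerating all 2-colourings of K_6. *)

Definition balanced (w : seq bool) := count id w = count negb w.

Definition bounded_switches (w : seq bool) := forall b w1 w2,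
  w = w1 ++ [:: ~~ b, b & w2] -> count (pred1 b) w1 <= (count (pred1 (~~ b)) w1).+1.

Lemma count_pred1_bool (b : bool) s :
  count (pred1 b) s = if b then count id s else count negb s.
Proof. by case: b; apply: eq_count => [[]]. Qed.

Lemma balanced_block t b : balanced (block t b).
Proof. by rewrite /balanced /block !count_cat !count_nseq; case: b => /=; lia. Qed.

Lemma balanced_catr u v : balanced u -> balanced (u ++ v) -> balanced v.
Proof. by rewrite /balanced !count_cat; lia. Qed.

Lemma bounded_switches_catr u v :
  balanced u -> bounded_switches (u ++ v) -> bounded_switches v.
Proof.
move=> bal_u bnd b w1 w2 eq_v; have := bnd b (u ++ w1) w2.
rewrite eq_v catA => /(_ erefl); rewrite !count_cat.
by rewrite !count_pred1_bool; case: (b); rewrite /= bal_u; lia.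
Qed.

Lemma split_leading_run (b : bool) w :
  exists t rest, w = nseq t b ++ rest /\ head (~~ b) rest != b.
Proof.
elim: w => [|c w [t [rest [-> head_rest]]]]; first by exists 0, [::]; case: b.
have [-> | neq_cb] := eqVneq c b; first by exists t.+1, rest.
by exists 0, (c :: nseq t b ++ rest).
Qed.

Lemma collectable_bounded_switches w :
  balanced w -> bounded_switches w -> collectable w.
Proof.
have [n] := ubnP (size w); elim: n w => // n IHn [_ _ _|b w' size_w bal bnd].
  by exists [::].
have [t [rest [eq_w head_rest]]] := split_leading_run b (b :: w').
have t_gt0 : 0 < t by case: t eq_w head_rest => // /= <- /=; rewrite eqxx.
have [k [rest2 [eq_rest head_rest2]]] := split_leading_run (~~ b) rest.
rewrite negbK in head_rest2.
have [le_tk | lt_kt] := leqP t k.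
- set rest' := nseq (k - t) (~~ b) ++ rest2.
  have eq_w' : b :: w' = block t b ++ rest'.
    by rewrite eq_w eq_rest /rest' /block -catA; congr (_ ++ _); rewrite catA -nseqD subnKC.
  have size_rest' : size rest' < n.
    by move: size_w; rewrite eq_w' size_cat /block size_cat !size_nseq; lia.
  have bal_rest' : balanced rest'.
    by apply: balanced_catr (balanced_block t b) _; rewrite -eq_w'.
  have bnd_rest' : bounded_switches rest'.
    by apply: bounded_switches_catr (balanced_block t b) _; rewrite -eq_w'.
  have [bs [bs_gt0 eq_bs]] := IHn rest' size_rest' bal_rest' bnd_rest'.
  by exists ((t, b) :: bs); rewrite /= t_gt0 eq_w' eq_bs.
- exfalso; case: rest2 eq_rest head_rest2 => [|c rest3] eq_rest head_rest2.
    move: bal; rewrite /balanced eq_w eq_rest cats0 !count_cat !count_nseq.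
    by case: (b) lt_kt => /=; lia.
  have eq_cb : c = b by move: head_rest2; case: (b); case: (c).
  subst c.
  case: k eq_rest lt_kt => [|k] eq_rest lt_kt.
    by move: head_rest; rewrite eq_rest /= eqxx.
  have := bnd b (nseq t b ++ nseq k (~~ b)) rest3.
  rewrite eq_w eq_rest -addn1 nseqD -!catA => /(_ erefl).
  rewrite !count_cat !count_nseq /= eqxx.
  by case: (b) lt_kt => /=; lia.
Qed.

Section SortedVertices.
Variable N : nat.
Implicit Types (X Y Z E F : {set 'I_N}) (x y : 'I_N).

Definition sorted_vertices E := sort (fun x y : 'I_N => x <= y) (enum E).

Local Notation ltv := (relpre (@nat_of_ord N) ltn).

Lemma ltv_trans : transitive ltv.
Proof. exact: relpre_trans ltn_trans. Qed.

Lemma sorted_vertices_ltn E : sorted ltv (sorted_vertices E).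
Proof.
rewrite -sorted_map ltn_sorted_uniq_leq (map_inj_uniq val_inj) sort_uniq enum_uniq.
by rewrite sorted_map; apply: sort_sorted => x y; exact: leq_total.
Qed.

Lemma mem_sorted_vertices E x : (x \in sorted_vertices E) = (x \in E).
Proof. by rewrite mem_sort mem_enum. Qed.

Lemma sorted_vertices_eq s E : sorted ltv s -> s =i E -> s = sorted_vertices E.
Proof.
move=> sorted_s eq_sE; apply: (irr_sorted_eq ltv_trans) => //.
- by move=> x; rewrite /= ltnn.
- exact: sorted_vertices_ltn.
- by move=> x; rewrite eq_sE mem_sorted_vertices.
Qed.

Lemma filter_sorted_verticesU X Y : [disjoint X & Y] ->
  [seq x <- sorted_vertices (X :|: Y) | x \in X] = sorted_vertices X /\
  [seq x <- sorted_vertices (X :|: Y) | x \notin X] = sorted_vertices Y.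
Proof.
have sorted_part a := sorted_filter ltv_trans a (sorted_vertices_ltn (X :|: Y)).
move=> dXY; split; apply: sorted_vertices_eq => // x;
  rewrite mem_filter mem_sorted_vertices in_setU.
- by case: (x \in X).
- by case Xx: (x \in X); rewrite ?(disjointFr dXY Xx).
Qed.

Lemma sorted_vertices_min E a s : sorted_vertices E = a :: s ->
  a \in E /\ forall x, x \in E -> a <= x.
Proof.
move=> eq_s; have := sorted_vertices_ltn E.
rewrite eq_s (sorted_pairwise ltv_trans) /= => /andP [/allP a_lt _].
split=> [|x]; first by rewrite -mem_sorted_vertices eq_s mem_head.
rewrite -mem_sorted_vertices eq_s in_cons => /predU1P [-> //|/a_lt].
exact: ltnW.
Qed.

Definition starts_first E F := exists2 a, a \in E & forall x, x \in E :|: F -> a <= x.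

Definition forms E F w := [disjoint E & F] /\ pattern_of E F = w.

Lemma pattern_ofE E F : starts_first E F ->
  pattern_of E F = [seq x \in E | x <- sorted_vertices (E :|: F)].
Proof.
move=> [a Ea a_min]; rewrite /pattern_of -/(sorted_vertices _).
case eq_s: (sorted_vertices (E :|: F)) => [|a0 s].
  by move: (mem_sorted_vertices (E :|: F) a); rewrite eq_s in_setU Ea.
have [EFa0 a0_min] := sorted_vertices_min eq_s.
have -> : a0 = a by apply/val_inj/eqP; rewrite eqn_leq a_min ?a0_min // in_setU Ea.
rewrite /= Ea; congr (_ :: _); apply: eq_map => x; exact: eqb_id.
Qed.

Lemma forms_sym E F w : forms E F w -> forms F E w.
Proof.
move=> [dEF <-]; split; first by rewrite disjoint_sym.
rewrite /pattern_of setUC; case eq_s: (sort _ _) => [|a s] //=.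
have memE x : x \in a :: s -> (x \in E) = (x \notin F).
  rewrite -eq_s mem_sort mem_enum in_setU.
  by case Ex: (x \in E); rewrite ?(disjointFr dEF Ex) //= => ->.
rewrite !eqxx; congr (_ :: _); apply/eq_in_map => x sx.
by rewrite !memE ?mem_head ?in_cons ?sx ?orbT //; case: (x \in F); case: (a \in F).
Qed.

Lemma starts_first_total E F : [disjoint E & F] -> E :|: F != set0 ->
  starts_first E F \/ starts_first F E.
Proof.
move=> dEF /set0Pn [x0 EFx0].
case eq_s: (sorted_vertices (E :|: F)) => [|a s].
  by move: (mem_sorted_vertices (E :|: F) x0); rewrite eq_s EFx0.
have [] := sorted_vertices_min eq_s; rewrite in_setU => /orP [Ea|Fa] a_min.
- by left; exists a.
- by right; exists a => // x; rewrite setUC; apply: a_min.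
Qed.

Lemma starts_first_trans X Y Z :
  starts_first X Y -> starts_first Y Z -> starts_first X Z.
Proof.
move=> [a Xa a_min] [b Yb b_min]; exists a => // x; rewrite in_setU.
case/orP => [Xx|Zx]; first by rewrite a_min // in_setU Xx.
by rewrite (leq_trans (a_min b _)) ?b_min // in_setU ?Yb ?Zx ?orbT.
Qed.

Section Switch.
Variables (s : seq 'I_N) (x0 : 'I_N).
Hypothesis sorted_s : sorted ltv s.
Local Notation "P .[ i ]" := (nth x0 (filter P s) i).

Lemma sorted_map_switch (P : pred 'I_N) w1 w2 :
  map P s = w1 ++ [:: false, true & w2] ->
  let i := count id w1 in let j := count negb w1 in
  [/\ (predC P).[j] < P.[i], forall k, k < i -> P.[k] < (predC P).[j] &
      forall k, j < k < size (filter (predC P) s) -> P.[i] < (predC P).[k]].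
Proof.
move=> eq_ms /=.
have ms1 : map P (take (size w1) s) = w1 by rewrite map_take eq_ms take_size_cat.
have ms2 : map P (drop (size w1) s) = [:: false, true & w2].
  by rewrite map_drop eq_ms drop_size_cat.
have := sorted_s; rewrite -(cat_take_drop (size w1) s).
move: ms1 ms2; set s1 := take _ s.
case: (drop _ s) => [|v [|v' s2]] // ms1 [Pv Pv' _].
rewrite (sorted_pairwise ltv_trans) pairwise_cat !pairwise_cons allrel_consr.
case/and3P=> /andP [s1_lt_v _] _ /andP [/andP [v_lt_v' _] /andP [v'_lt_s2 _]].
have size_p1 : size (filter P s1) = count id w1 by rewrite size_filter -ms1 count_map.
have size_q1 : size (filter (predC P) s1) = count negb w1.
  by rewrite size_filter -ms1 count_map.
rewrite !filter_cat /= Pv Pv' /= !nth_cat size_p1 size_q1 !ltnn !subnn /=.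
split=> // k; rewrite nth_cat ?size_p1 ?size_q1.
- move=> lt_k; rewrite lt_k; apply: (allP s1_lt_v).
  have := mem_nth x0 (_ : k < size (filter P s1)).
  by rewrite mem_filter size_p1 => /(_ lt_k) /andP [].
- rewrite size_cat size_q1 /= => /andP [lt_jk lt_k].
  rewrite (leq_gtF (ltnW lt_jk)); case def_k: (k - count negb w1) => [|k'].
    by move: lt_jk; rewrite -subn_gt0 def_k.
  have lt_k' : k' < size (filter (predC P) s2) by move: lt_k def_k; clear; lia.
  by apply: (allP v'_lt_s2); have := mem_nth x0 lt_k'; rewrite mem_filter => /andP [].
Qed.

Lemma sorted_map_switchN (P : pred 'I_N) w1 w2 :
  map P s = w1 ++ [:: true, false & w2] ->
  let i := count id w1 in let j := count negb w1 in
  [/\ P.[i] < (predC P).[j], forall k, k < j -> (predC P).[k] < P.[i] &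
      forall k, i < k < size (filter P s) -> (predC P).[j] < P.[k]].
Proof.
move=> eq_ms /=; have eq_filterCC : filter (predC (predC P)) s = filter P s.
  by apply: eq_filter => x /=; rewrite negbK.
have count_negb (w : seq bool) : count id (map negb w) = count negb w by rewrite count_map.
have count_negbK (w : seq bool) : count negb (map negb w) = count id w.
  by rewrite count_map; apply: eq_count => b /=; rewrite negbK.
have := @sorted_map_switch (predC P) (map negb w1) (map negb w2).
by rewrite map_comp eq_ms map_cat count_negb count_negbK eq_filterCC; apply.
Qed.

End Switch.

Lemma ordered_triangle_bounded_switches X Y Z w :
  forms X Y w -> forms X Z w -> forms Y Z w ->
  starts_first X Y -> starts_first X Z -> starts_first Y Z ->
  balanced w -> bounded_switches w.
Proof.
move=> [dXY pXY] [dXZ pXZ] [dYZ pYZ] fXY fXZ fYZ bal b w1 w2 eq_w.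
have [x0 _ _] := fXY.
rewrite pattern_ofE // in pXY; rewrite pattern_ofE // in pXZ; rewrite pattern_ofE // in pYZ.
have [sX_XY sY_XY] := filter_sorted_verticesU dXY.
have [sX_XZ sZ_XZ] := filter_sorted_verticesU dXZ.
have [sY_YZ sZ_YZ] := filter_sorted_verticesU dYZ.
have size_Y : size (sorted_vertices Y) = count id w.
  by rewrite -sY_YZ size_filter -pYZ count_map.
rewrite leqNgt !count_pred1_bool; apply/negP.
case: b eq_w => /= eq_w big_prefix; rewrite eq_w in pXY pXZ pYZ.
- have [_ _ XY3] := sorted_map_switch x0 (sorted_vertices_ltn _) pXY.
  have [_ YZ2 _] := sorted_map_switch x0 (sorted_vertices_ltn _) pYZ.
  have [XZ1 _ _] := sorted_map_switch x0 (sorted_vertices_ltn _) pXZ.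
  rewrite sX_XY sY_XY in XY3; rewrite sY_YZ sZ_YZ in YZ2; rewrite sX_XZ sZ_XZ in XZ1.
  (* With i, j the numbers of A's and B's in w1: z_j < x_i < y_(j+1) < z_j. *)
  have := XY3 (count negb w1).+1; have := YZ2 (count negb w1).+1 big_prefix.
  by move: XZ1; rewrite size_Y eq_w count_cat /=; lia.
- have [_ XY2 _] := sorted_map_switchN x0 (sorted_vertices_ltn _) pXY.
  have [_ _ YZ3] := sorted_map_switchN x0 (sorted_vertices_ltn _) pYZ.
  have [XZ1 _ _] := sorted_map_switchN x0 (sorted_vertices_ltn _) pXZ.
  rewrite sX_XY sY_XY in XY2; rewrite sY_YZ sZ_YZ in YZ3; rewrite sX_XZ sZ_XZ in XZ1.
  (* Likewise x_i < z_j < y_(i+1) < x_i. *)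
  have := YZ3 (count id w1).+1; have := XY2 (count id w1).+1 big_prefix.
  by move: XZ1 bal; rewrite /balanced size_Y eq_w !count_cat /=; lia.
Qed.

Lemma triangle_bounded_switches X Y Z w :
  X != set0 -> Y != set0 -> Z != set0 ->
  forms X Y w -> forms X Z w -> forms Y Z w -> balanced w -> bounded_switches w.
Proof.
have setU_neq0 E F : E != set0 -> E :|: F != set0.
  by case/set0Pn=> x Ex; apply/set0Pn; exists x; rewrite in_setU Ex.
wlog fXY : X Y Z / starts_first X Y.
  move=> wlog nX nY nZ sXY sXZ sYZ bal.
  have [fXY|fYX] := starts_first_total sXY.1 (setU_neq0 _ _ nX); first exact: (wlog X Y Z).
  by apply: (wlog Y X Z) => //; apply: forms_sym.
wlog fXZ : X Y Z fXY / starts_first X Z.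
  move=> wlog nX nY nZ sXY sXZ sYZ bal.
  have [fXZ|fZX] := starts_first_total sXZ.1 (setU_neq0 _ _ nX); first exact: (wlog X Y Z).
  have fZY := starts_first_trans fZX fXY.
  by apply: (wlog Z X Y) => //; apply: forms_sym.
wlog fYZ : Y Z fXY fXZ / starts_first Y Z.
  move=> wlog nX nY nZ sXY sXZ sYZ bal.
  have [fYZ|fZY] := starts_first_total sYZ.1 (setU_neq0 _ _ nY); first exact: (wlog Y Z).
  by apply: (wlog Z Y) => //; apply: forms_sym.
by move=> _ _ _ sXY sXZ sYZ; apply: (ordered_triangle_bounded_switches sXY sXZ sYZ).
Qed.

End SortedVertices.

Lemma mono_triangle_in_set (T : finType) m R (A : {set T}) (col : T -> T -> 'I_m) :
  mono_triangle_prop m R -> R <= #|A| ->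
  exists x y z, [/\ uniq [:: x; y; z], {subset [:: x; y; z] <= A},
                    col x y = col y z & col x y = col x z].
Proof.
move=> mono le_RA.
pose e (i : 'I_R) : T := enum_val (widen_ord le_RA i).
have e_inj : injective e by move=> i j /enum_val_inj/(congr1 val) eq_ij; apply: val_inj.
have [i [j [k [lt_ij lt_jk col_ijk col_ijk']]]] := mono (fun i j => col (e i) (e j)).
exists (e i), (e j), (e k); split=> //.
  rewrite /= !inE negb_or !(inj_eq e_inj) -!val_eqE /= !neq_ltn lt_ij lt_jk.
  by rewrite (ltn_trans lt_ij lt_jk).
by move=> x; rewrite !inE => /or3P [] /eqP ->; apply: enum_valP.
Qed.

Lemma P_clique_card_lt r m N (P : seq (seq bool)) (M : {set {set 'I_N}}) R :
  0 < r -> 0 < m -> size P = m ->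
  (forall w, w \in P -> is_pattern r w /\ ~ collectable w) ->
  ordered_matching r M -> P_clique P M -> mono_triangle_prop m R -> #|M| < R.
Proof.
(* [0 < m] is needed: [mono_triangle_prop 0 1] holds vacuously. *)
move=> r_gt0 m_gt0 size_P P_ok [card_M [disj_M _]] clique_M mono.
rewrite ltnNge; apply/negP => le_RM.
case: m m_gt0 size_P mono => // m _ size_P mono.
pose col (e f : {set 'I_N}) : 'I_m.+1 := inord (index (pattern_of e f) P).
have [e [f [g [uniq_efg sub_efg col_efg col_efg']]]] := mono_triangle_in_set col mono le_RM.
have [Me Mf Mg] : [/\ e \in M, f \in M & g \in M] by rewrite !sub_efg ?inE ?eqxx ?orbT.
move: uniq_efg; rewrite /= !inE negb_or andbT => /andP [/andP [ef eg] fg].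
have col_pattern x y x' y' :
    x \in M -> y \in M -> x != y -> x' \in M -> y' \in M -> x' != y' ->
    col x y = col x' y' -> pattern_of x y = pattern_of x' y'.
  move=> Mx My xy Mx' My' xy' /(congr1 val).
  rewrite /= !inordK -?size_P ?index_mem ?clique_M //.
  exact: (@index_inj _ [::] P _ _ (clique_M _ _ Mx My xy) (clique_M _ _ Mx' My' xy')).
set w := pattern_of e f.
have [[count_A [count_B _]] not_collectable] := P_ok w (clique_M _ _ Me Mf ef).
have bal_w : balanced w by rewrite /balanced count_A count_B.
apply: not_collectable; apply: collectable_bounded_switches => //.
have nonempty x : x \in M -> x != set0 by move=> Mx; rewrite -card_gt0 card_M.
apply: (triangle_bounded_switches (nonempty _ Me) (nonempty _ Mf) (nonempty _ Mg)).
- by split; first exact: disj_M.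
- by split; [exact: disj_M | apply: col_pattern; rewrite -?col_efg -?col_efg'].
- by split; [exact: disj_M | apply: col_pattern; rewrite -?col_efg -?col_efg'].
- exact: bal_w.
Qed.

(* [bool_seqs 15] lists all 2-colourings of the 15 edges of K_6, enumerated as in
   [pairs6]; [colouring_of] decodes one. *)
Definition pairs6 : seq (nat * nat) := [seq (i, j) | j <- iota 0 6, i <- iota 0 j].

Definition colouring_of (l : seq bool) (i j : nat) : bool := nth false l (index (i, j) pairs6).

Definition has_mono_triangle6 (f : nat -> nat -> bool) : bool :=
  has (fun k => has (fun j => has (fun i => (f i j == f j k) && (f i j == f i k))
    (iota 0 j)) (iota 0 k)) (iota 0 6).

Fixpoint bool_seqs n : seq (seq bool) :=
  if n is n'.+1 then [seq b :: l | b <- [:: true; false], l <- bool_seqs n'] else [:: [::]].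

Lemma mem_bool_seqs n l : size l = n -> l \in bool_seqs n.
Proof.
elim: n l => [|n IHn] [|b l] //= [/IHn l_n].
have cons_inj c : injective (@cons bool c) by move=> ? ? [].
by rewrite !mem_cat; case: b; rewrite (mem_map (cons_inj _)) l_n ?orbT.
Qed.

Lemma mem_pairs6 i j : i < j < 6 -> (i, j) \in pairs6.
Proof.
by case/andP=> lt_ij lt_j6; apply/allpairsPdep; exists j, i; rewrite !mem_iota lt_ij.
Qed.

Lemma has_mono_triangle6_colourings : all (has_mono_triangle6 \o colouring_of) (bool_seqs 15).
Proof. by vm_compute. Qed.

Lemma eq_has_mono_triangle6 f g : (forall i j, i < j < 6 -> f i j = g i j) ->
  has_mono_triangle6 f = has_mono_triangle6 g.
Proof.
move=> eq_fg; apply: eq_in_has => k; rewrite mem_iota /= => lt_k6.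
apply: eq_in_has => j; rewrite mem_iota /= => lt_jk.
apply: eq_in_has => i; rewrite mem_iota /= => lt_ij.
have lt_j6 := ltn_trans lt_jk lt_k6.
by rewrite !eq_fg ?lt_ij ?lt_jk ?lt_j6 ?(ltn_trans lt_ij lt_jk).
Qed.

Lemma has_mono_triangle6_all f : has_mono_triangle6 f.
Proof.
pose l := [seq f p.1 p.2 | p <- pairs6].
rewrite -(@eq_has_mono_triangle6 (colouring_of l)).
  exact: allP has_mono_triangle6_colourings l (mem_bool_seqs (size_map _ _)).
by move=> i j ij; rewrite /colouring_of (nth_map (0, 0)) ?index_mem ?nth_index ?mem_pairs6.
Qed.

Lemma mono_triangle_prop_2_6 : mono_triangle_prop 2 6.
Proof.
move=> c; have eq_I2 (x y : 'I_2) : (x == ord0) = (y == ord0) -> x = y.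
  by case: x y => [[|[|x]] ?] [[|[|y]] ?] // _; apply: val_inj.
have /hasP [k] := has_mono_triangle6_all (fun i j => c (inord i) (inord j) == ord0).
rewrite mem_iota => /= lt_k6 /hasP [j]; rewrite mem_iota => /= lt_jk /hasP [i].
rewrite mem_iota => /= lt_ij /andP [/eqP eq1 /eqP eq2].
exists (inord i), (inord j), (inord k); have lt_j6 := ltn_trans lt_jk lt_k6.
by rewrite !inordK ?(ltn_trans lt_ij lt_j6) //; split=> //; apply: eq_I2.
Qed.

Theorem mainTheorem11 (r m : nat) (P : seq (seq bool)) :
  2 <= r -> 2 <= m -> uniq P -> size P = m ->
  (forall w, w \in P -> is_pattern r w /\ ~ collectable w) ->
  forall (N : nat) (M : {set {set 'I_N}}),
    ordered_matching r M -> P_clique P M ->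
    (forall R, is_Ramsey3 m R -> #|M| < R) /\ (m = 2 -> #|M| <= 5).
Proof.
move=> r_ge2 m_ge2 _ size_P P_ok N M matching_M clique_M.
have card_lt := P_clique_card_lt (ltnW r_ge2) (ltnW m_ge2) size_P P_ok matching_M clique_M.
split=> [R [mono_R _] | m_eq2]; first exact: card_lt.
by rewrite -ltnS; apply: card_lt; rewrite m_eq2; exact: mono_triangle_prop_2_6.
Qed.
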